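(* Let $(\mathcal{C},\mathbb{E},\mathfrak{s})$ be an extriangulated category with enough injective objects and enough projective objects, and let $(\mathcal{I},\mathcal{J})$ be an $\mathbb{E}$-cotorsion pair of ideals. Then the following statements are equivalent: (1) $(\mathcal{I},\mathcal{J})$ is a complete $\mathbb{E}$-cotorsion pair; (2) $\mathcal{I}$ is a special precovering ideal; (3) there is an additive subfunctor $\mathbb{F}\subseteq\mathbb{E}$ having enough special injective morphisms with $\mathcal{I}=\mathrm{Ph}(\mathbb{F})$; (4) there is an additive subfunctor $\mathbb{F}\subseteq\mathbb{E}$ having enough special projective morphisms with $\mathcal{I}=\mathbb{F}\text{-}\mathrm{proj}$; (5) $\mathcal{I}^\star$ has enough special injective morphisms and $\mathcal{I}=\mathrm{Ph}(\mathcal{I}^\star)$; (6) $\mathcal{J}_\star$ has enough special projective morphisms and $\mathcal{I}=\mathcal{J}_\star\text{-}\mathrm{proj}$; (7) $\mathcal{J}$ is a special preenveloping ideal; (8) there is an additive subfunctor $\mathbb{F}\subseteq\mathbb{E}$ having enough special projective morphisms with $\mathcal{J}=\mathrm{Coph}(\mathbb{F})$; (9) there is an additive subfunctor $\mathbb{F}\subseteq\mathbb{E}$ having enough special injective morphisms with $\mathcal{J}=\mathbb{F}\text{-}\mathrm{inj}$; (10) $\mathcal{J}_\star$ has enough special projective morphisms and $\mathcal{J}=\mathrm{Coph}(\mathcal{J}_\star)$; (11) $\mathcal{I}^\star$ has enough special injective morphisms and $\mathcal{J}=\mathcal{I}^\star\text{-}\mathrm{inj}$.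
   Context: An extriangulated category $(\mathcal{C},\mathbb{E},\mathfrak{s})$ (Nakaoka–Palu): additive $\mathcal{C}$, biadditive $\mathbb{E}:\mathcal{C}^{\mathrm{op}}\times\mathcal{C}\to\mathrm{Ab}$, additive realization $\mathfrak{s}$ assigning to each $\delta\in\mathbb{E}(C,A)$ an equivalence class of sequences $A\to B\to C$, forming $\mathbb{E}$-triangles $A\to B\to C\overset{\delta}{\dashrightarrow}$, satisfying (ET1)–(ET4), (ET3)$^{\mathrm{op}}$, (ET4)$^{\mathrm{op}}$. Notation $a_\star\delta=\mathbb{E}(C,a)(\delta)$, $c^\star\delta=\mathbb{E}(c,A)(\delta)$; a morphism of $\mathbb{E}$-triangles is a commuting triple $(a,b,c)$ with $a_\star\delta=c^\star\delta'$. Injective object $E$: $\mathbb{E}(C,E)=0$ for all $C$; projective object $P$: $\mathbb{E}(P,A)=0$ for all $A$; enough injectives: every $A$ admits an $\mathbb{E}$-triangle $A\to E\to C\overset{\delta}{\dashrightarrow}$, $E$ injective; enough projectives: every $C$ admits $K\to P\to C\overset{\delta}{\dashrightarrow}$, $P$ projective. Ideal: class of morphisms with zeros, closed under sums and two-sided composition. Additive subfunctor $\mathbb{F}$: subgroups $\mathbb{F}(C,A)\subseteq\mathbb{E}(C,A)$ stable under $a_\star,c^\star$; $\mathbb{F}$-triangles have extension in $\mathbb{F}$. $\mathrm{Ph}(\mathbb{F})$: morphisms $\varphi:X\to C$ with $\varphi^\star\delta\in\mathbb{F}$ for all $\delta\in\mathbb{E}(C,A)$; $\mathrm{Coph}(\mathbb{F})$: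 morphisms $\psi:A\to Y$ with $\psi_\star\delta\in\mathbb{F}$ for all $\delta\in\mathbb{E}(C,A)$. $\mathbb{F}\text{-}\mathrm{inj}$: $i:A\to Y$ with $i_\star\delta=0$ for all $\delta\in\mathbb{F}(C,A)$; $\mathbb{F}\text{-}\mathrm{proj}$: $p:X\to C$ with $p^\star\delta=0$ for all $\delta\in\mathbb{F}(C,A)$. For an ideal $\mathcal{I}$: $\mathcal{I}^\star=\{i^\star\delta\}$, $\mathcal{I}_\star=\{i_\star\delta\}$ ($i\in\mathcal{I}$, $\delta$ any composable $\mathbb{E}$-extension), additive subfunctors of $\mathbb{E}$. $\mathbb{F}$ has enough special injective morphisms: every $A$ admits an $\mathbb{F}$-triangle $A\xrightarrow{e}B\to C\overset{\delta}{\dashrightarrow}$ with $e\in\mathbb{F}\text{-}\mathrm{inj}$, an $\mathbb{E}$-triangle $A\to B'\to C'\overset{\delta'}{\dashrightarrow}$ and a morphism $(\mathrm{id}_A,b,\varphi)$ from the former to the latter with $\varphi\in\mathrm{Ph}(\mathbb{F})$. Dually, enough special projective morphisms: every $C$ admits an $\mathbb{F}$-triangle $K\to B\xrightarrow{p}C\overset{\delta}{\dashrightarrow}$ with $p\in\mathbb{F}\text{-}\mathrm{proj}$, an $\mathbb{E}$-triangle $K'\to B'\to C\overset{\delta'}{\dashrightarrow}$ and a morphism $(\psi,b,\mathrm{id}_C)$ from the latter to the former with $\psi\in\mathrm{Coph}(\mathbb{F})$. $\mathcal{M}^{\perp_{\mathbb{E}}}=\{g:A\to Y\mid m^\star g_\star\delta=0\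 \forall m\in\mathcal{M},\,m:X\to C,\ \forall\delta\in\mathbb{E}(C,A)\}$; ${}^{\perp_{\mathbb{E}}}\mathcal{M}$ defined by $g^\star m_\star\delta=0$. $\mathbb{E}$-cotorsion pair: $\mathcal{I}={}^{\perp_{\mathbb{E}}}\mathcal{J}$, $\mathcal{J}=\mathcal{I}^{\perp_{\mathbb{E}}}$; complete if $\mathcal{I}$ special precovering and $\mathcal{J}$ special preenveloping. Special $\mathcal{I}$-precover of $C$: $i:X\to C$ in $\mathcal{I}$ with $\mathbb{E}$-triangles $A\to B\to C\overset{\delta}{\dashrightarrow}$, $A'\to X\xrightarrow{i}C\overset{\delta'}{\dashrightarrow}$ and a morphism $(j,b,\mathrm{id}_C)$, $j\in\mathcal{I}^{\perp_{\mathbb{E}}}$. Special $\mathcal{J}$-preenvelope of $A$: $e:A\to X$ in $\mathcal{J}$ with $\mathbb{E}$-triangles $A\xrightarrow{e}X\to Y\overset{\delta}{\dashrightarrow}$, $A\to B\to C\overset{\delta'}{\dashrightarrow}$ and a morphism $(\mathrm{id}_A,b,j)$, $j\in{}^{\perp_{\mathbb{E}}}\mathcal{J}$. Special precovering/preenveloping ideal: every object has one. *)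

From HB Require Import structures.
From mathcomp Require Import all_boot all_algebra.
Set Implicit Arguments. Unset Strict Implicit. Unset Printing Implicit Defensive.
Import GRing.Theory.
Local Open Scope ring_scope.

(*   Ext C A = E(C,A), push a = a_*, pull c = c^*, and the realization s,   *)
(*   encoded as the predicate  real d x y  <->  [A -x-> B -y-> C] in s(d).  *)
Record PreExtri := {
  Obj : Type;
  Hom : Obj -> Obj -> zmodType;
  comp : forall A B C : Obj, Hom B C -> Hom A B -> Hom A C;
  idm : forall A : Obj, Hom A A;
  bp : Obj -> Obj -> Obj;
  bin1 : forall A B, Hom A (bp A B);
  bin2 : forall A B, Hom B (bp A B);
  bpr1 : forall A B, Hom (bp A B) A;
  bpr2 : forall A B, Hom (bp A B) B;
  Ext : Obj -> Obj -> zmodType;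
  push : forall C A A', Hom A A' -> Ext C A -> Ext C A';
  pull : forall C' C A, Hom C' C -> Ext C A -> Ext C' A;
  real : forall C A, Ext C A -> forall B, Hom A B -> Hom B C -> Prop
}.

Arguments Hom {p}.
Arguments Ext {p}.
Arguments comp {p A B C}.
Arguments idm {p}.
Arguments bp {p}.
Arguments bin1 {p}. Arguments bin2 {p}. Arguments bpr1 {p}. Arguments bpr2 {p}.
Arguments push {p C A A'}.
Arguments pull {p C' C A}.
Arguments real {p C A} d {B}.

Section Extri.
Variable X : PreExtri.
Local Notation Obj := (Obj X).

Definition is_iso (A B : Obj) (f : Hom A B) :=
  exists g : Hom B A, comp g f = idm A /\ comp f g = idm B.

Definition is_additive : Prop :=
  (((forall (A B C D : Obj) (h : Hom C D) (g : Hom B C) (f : Hom A B),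
         comp h (comp g f) = comp (comp h g) f)) /\
     ((forall (A B : Obj) (f : Hom A B), comp (idm B) f = f)) /\
     ((forall (A B : Obj) (f : Hom A B), comp f (idm A) = f)) /\
     ((forall (A B C : Obj) (g g' : Hom B C) (f : Hom A B),
         comp (g + g') f = comp g f + comp g' f)) /\
     ((forall (A B C : Obj) (g : Hom B C) (f f' : Hom A B),
         comp g (f + f') = comp g f + comp g f')) /\
     ((exists Z : Obj, idm Z = 0)) /\
     ((forall A B : Obj,
         [/\ comp (bpr1 A B) (bin1 A B) = idm A,
             comp (bpr2 A B) (bin2 A B) = idm B,
             comp (bpr1 A B) (bin2 A B) = 0,
             comp (bpr2 A B) (bin1 A B) = 0 &
             comp (bin1 A B) (bpr1 A B) + comp (bin2 A B) (bpr2 A B) = idm (bp A B)]))).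

Definition is_biadditive_functor : Prop :=
  (((forall (C A A' : Obj) (a : Hom A A') (d d' : Ext C A),
         push a (d + d') = push a d + push a d')) /\
     ((forall (C' C A : Obj) (c : Hom C' C) (d d' : Ext C A),
         pull c (d + d') = pull c d + pull c d')) /\
     ((forall (C A A' : Obj) (a a' : Hom A A') (d : Ext C A),
         push (a + a') d = push a d + push a' d)) /\
     ((forall (C' C A : Obj) (c c' : Hom C' C) (d : Ext C A),
         pull (c + c') d = pull c d + pull c' d)) /\
     ((forall (C A : Obj) (d : Ext C A), push (idm A) d = d)) /\
     ((forall (C A : Obj) (d : Ext C A), pull (idm C) d = d)) /\
     ((forall (C A A' A'' : Obj) (a : Hom A A') (a' : Hom A' A'') (d : Ext C A),
         push (comp a' a) d = push a' (push a d))) /\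
     ((forall (C'' C' C A : Obj) (c : Hom C' C) (c' : Hom C'' C') (d : Ext C A),
         pull (comp c c') d = pull c' (pull c d))) /\
     ((forall (C' C A A' : Obj) (c : Hom C' C) (a : Hom A A') (d : Ext C A),
         push a (pull c d) = pull c (push a d)))).

Definition seq_equiv (A B B' C : Obj) (x : Hom A B) (y : Hom B C)
  (x' : Hom A B') (y' : Hom B' C) :=
  exists b : Hom B B', [/\ is_iso b, comp b x = x' & comp y' b = y].

Definition tri_morph (A B C A' B' C' : Obj)
  (d : Ext C A) (x : Hom A B) (y : Hom B C)
  (d' : Ext C' A') (x' : Hom A' B') (y' : Hom B' C')
  (a : Hom A A') (b : Hom B B') (c : Hom C C') :=
  [/\ comp b x = comp x' a, comp c y = comp y' b & push a d = pull c d'].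

Definition ext_sum (C A C' A' : Obj) (d : Ext C A) (d' : Ext C' A') : Ext (bp C C') (bp A A') :=
  push (bin1 A A') (pull (bpr1 C C') d) + push (bin2 A A') (pull (bpr2 C C') d').

Definition hom_sum (A B A' B' : Obj) (f : Hom A B) (f' : Hom A' B') : Hom (bp A A') (bp B B') :=
  comp (bin1 B B') (comp f (bpr1 A A')) + comp (bin2 B B') (comp f' (bpr2 A A')).

(* s is a realization of E (each s(d) is one equivalence class), Def. 2.9 *)
Definition is_realization : Prop :=
  [/\ (forall (C A : Obj) (d : Ext C A), exists (B : Obj) (x : Hom A B) (y : Hom B C), real d x y),
      (forall (C A B B' : Obj) (d : Ext C A) (x : Hom A B) (y : Hom B C)
              (x' : Hom A B') (y' : Hom B' C),
         real d x y -> (real d x' y' <-> seq_equiv x y x' y')) &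
      (forall (A B C A' B' C' : Obj) (d : Ext C A) (x : Hom A B) (y : Hom B C)
              (d' : Ext C' A') (x' : Hom A' B') (y' : Hom B' C')
              (a : Hom A A') (c : Hom C C'),
         real d x y -> real d' x' y' -> push a d = pull c d' ->
         exists b : Hom B B', comp b x = comp x' a /\ comp c y = comp y' b)].

Definition ET2 : Prop :=
  (forall C A : Obj, real (0 : Ext C A) (bin1 A C) (bpr2 A C)) /\
  (forall (A B C A' B' C' : Obj) (d : Ext C A) (x : Hom A B) (y : Hom B C)
          (d' : Ext C' A') (x' : Hom A' B') (y' : Hom B' C'),
     real d x y -> real d' x' y' -> real (ext_sum d d') (hom_sum x x') (hom_sum y y')).

Definition ET3 : Prop :=
  forall (A B C A' B' C' : Obj) (d : Ext C A) (x : Hom A B) (y : Hom B C)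
         (d' : Ext C' A') (x' : Hom A' B') (y' : Hom B' C')
         (a : Hom A A') (b : Hom B B'),
    real d x y -> real d' x' y' -> comp b x = comp x' a ->
    exists c : Hom C C', tri_morph d x y d' x' y' a b c.

Definition ET3op : Prop :=
  forall (A B C A' B' C' : Obj) (d : Ext C A) (x : Hom A B) (y : Hom B C)
         (d' : Ext C' A') (x' : Hom A' B') (y' : Hom B' C')
         (b : Hom B B') (c : Hom C C'),
    real d x y -> real d' x' y' -> comp c y = comp y' b ->
    exists a : Hom A A', tri_morph d x y d' x' y' a b c.

Definition ET4 : Prop :=
  forall (A B C D F : Obj) (f : Hom A B) (f' : Hom B D) (g : Hom B C) (g' : Hom C F)
         (d : Ext D A) (d' : Ext F B),
    real d f f' -> real d' g g' ->
    exists (E : Obj) (dd : Hom D E) (e : Hom E F) (h' : Hom C E) (d'' : Ext E A),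
      ((real d'' (comp g f) h') /\
     (comp dd f' = comp h' g) /\
     (comp e h' = g') /\
     (real (push f' d') dd e) /\
     (pull dd d'' = d) /\
     (push f d'' = pull e d')).

Definition ET4op : Prop :=
  forall (D A B F C : Obj) (f' : Hom D A) (f : Hom A B) (g' : Hom F B) (g : Hom B C)
         (d : Ext B D) (d' : Ext C F),
    real d f' f -> real d' g' g ->
    exists (E : Obj) (dd : Hom D E) (e : Hom E F) (h' : Hom E A) (d'' : Ext C E),
      ((real d'' h' (comp g f)) /\
     (comp h' dd = f') /\
     (comp f h' = comp g' e) /\
     (real (pull g' d) dd e) /\
     (d' = push e d'') /\
     (push dd d = pull g d'')).

Definition is_extriangulated : Prop :=
  ((is_additive) /\
     (is_biadditive_functor) /\
     (is_realization) /\
     (ET2) /\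
     (ET3) /\
     (ET3op) /\
     (ET4) /\
     (ET4op)).

Definition injective_obj (E : Obj) := forall (C : Obj) (d : Ext C E), d = 0.
Definition projective_obj (P : Obj) := forall (A : Obj) (d : Ext P A), d = 0.

Definition enough_injectives : Prop :=
  forall A : Obj, exists (E C : Obj) (x : Hom A E) (y : Hom E C) (d : Ext C A),
    injective_obj E /\ real d x y.

Definition enough_projectives : Prop :=
  forall C : Obj, exists (K P : Obj) (x : Hom K P) (y : Hom P C) (d : Ext C K),
    projective_obj P /\ real d x y.

Definition ideal := forall A B : Obj, Hom A B -> Prop.

Definition is_ideal (I : ideal) : Prop :=
  [/\ (forall A B : Obj, I A B 0),
      (forall (A B : Obj) (f g : Hom A B), I A B f -> I A B g -> I A B (f + g)),
      (forall (A B C : Obj) (g : Hom B C) (f : Hom A B), I A B f -> I A C (comp g f)) &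
      (forall (A B C : Obj) (g : Hom B C) (f : Hom A B), I B C g -> I A C (comp g f))].

Definition same_ideal (I I' : ideal) := forall (A B : Obj) (f : Hom A B), I A B f <-> I' A B f.

Definition subfun := forall C A : Obj, Ext C A -> Prop.

Definition is_add_subfunctor (F : subfun) : Prop :=
  [/\ (forall C A : Obj, F C A 0),
      (forall (C A : Obj) (d d' : Ext C A), F C A d -> F C A d' -> F C A (d + d')),
      (forall (C A : Obj) (d : Ext C A), F C A d -> F C A (- d)),
      (forall (C A A' : Obj) (a : Hom A A') (d : Ext C A), F C A d -> F C A' (push a d)) &
      (forall (C' C A : Obj) (c : Hom C' C) (d : Ext C A), F C A d -> F C' A (pull c d))].

Definition Ph (F : subfun) : ideal :=
  fun Y C (phi : Hom Y C) => forall (A : Obj) (d : Ext C A), F Y A (pull phi d).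
Definition Coph (F : subfun) : ideal :=
  fun A Y (psi : Hom A Y) => forall (C : Obj) (d : Ext C A), F C Y (push psi d).
Definition Finj (F : subfun) : ideal :=
  fun A Y (i : Hom A Y) => forall (C : Obj) (d : Ext C A), F C A d -> push i d = 0.
Definition Fproj (F : subfun) : ideal :=
  fun Y C (p : Hom Y C) => forall (A : Obj) (d : Ext C A), F C A d -> pull p d = 0.

Definition upstar (I : ideal) : subfun :=
  fun Y A (t : Ext Y A) => exists (C : Obj) (i : Hom Y C) (d : Ext C A), I Y C i /\ t = pull i d.
Definition lowstar (J : ideal) : subfun :=
  fun C Y (t : Ext C Y) => exists (A : Obj) (j : Hom A Y) (d : Ext C A), J A Y j /\ t = push j d.

Definition enough_sp_inj (F : subfun) : Prop :=
  forall A : Obj, exists (B C : Obj) (e : Hom A B) (y : Hom B C) (d : Ext C A),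
    [/\ F C A d, real d e y, Finj F e &
      exists (B' C' : Obj) (x' : Hom A B') (y' : Hom B' C') (d' : Ext C' A)
             (b : Hom B B') (phi : Hom C C'),
        [/\ real d' x' y', tri_morph d e y d' x' y' (idm A) b phi & Ph F phi]].

Definition enough_sp_proj (F : subfun) : Prop :=
  forall C : Obj, exists (K B : Obj) (x : Hom K B) (p : Hom B C) (d : Ext C K),
    [/\ F C K d, real d x p, Fproj F p &
      exists (K' B' : Obj) (x' : Hom K' B') (y' : Hom B' C) (d' : Ext C K')
             (psi : Hom K' K) (b : Hom B' B),
        [/\ real d' x' y', tri_morph d' x' y' d x p psi b (idm C) & Coph F psi]].

Definition perpR (M : ideal) : ideal :=
  fun A Y (g : Hom A Y) => forall (Z C : Obj) (m : Hom Z C), M Z C m ->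
    forall d : Ext C A, pull m (push g d) = 0.
Definition perpL (M : ideal) : ideal :=
  fun Z C (g : Hom Z C) => forall (A Y : Obj) (m : Hom A Y), M A Y m ->
    forall d : Ext C A, pull g (push m d) = 0.

Definition cotorsion_pair (I J : ideal) : Prop :=
  same_ideal I (perpL J) /\ same_ideal J (perpR I).

Definition special_precover (I : ideal) (Y C : Obj) (i : Hom Y C) : Prop :=
  I Y C i /\
  exists (A B : Obj) (x : Hom A B) (y : Hom B C) (d : Ext C A)
         (A' : Obj) (x' : Hom A' Y) (d' : Ext C A') (j : Hom A A') (b : Hom B Y),
    [/\ real d x y, real d' x' i, tri_morph d x y d' x' i j b (idm C) & perpR I j].

Definition special_preenvelope (J : ideal) (A Y : Obj) (e : Hom A Y) : Prop :=
  J A Y e /\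
  exists (Z : Obj) (y : Hom Y Z) (d : Ext Z A)
         (B C : Obj) (x' : Hom A B) (y' : Hom B C) (d' : Ext C A)
         (b : Hom Y B) (j : Hom Z C),
    [/\ real d e y, real d' x' y', tri_morph d e y d' x' y' (idm A) b j & perpL J j].

Definition special_precovering (I : ideal) : Prop :=
  forall C : Obj, exists (Y : Obj) (i : Hom Y C), special_precover I i.
Definition special_preenveloping (J : ideal) : Prop :=
  forall A : Obj, exists (Y : Obj) (e : Hom A Y), special_preenvelope J e.

Definition complete_cotorsion_pair (I J : ideal) : Prop :=
  special_precovering I /\ special_preenveloping J.

End Extri.

(* (2) => (7) is Salce's argument.  Take A -> E -> C0 with E injective, a
   special I-precover i : Y -> C0 with its triangle d', and realize i^* d0 as
   A -e-> P -> Y.  Since E is injective, every extension of A is g^* d0 for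
   some g.  For m in I the composite g m lies in I, hence kills d' (which is
   pushed out along a morphism of I-perp), hence factors through the
   deflation i; as e kills i^* d0, it kills m^* g^* d0.  So e lies in
   I-perp = J, and (id, _, i) makes it special.  (7) => (2) is dual.

   All other conditions reduce to (7) or (2).  A triangle witnessing a
   special J-preenvelope is a special injective morphism for every F with
   I <= Ph F and J <= F-inj; for such F the orthogonality inclusions
   Ph F <= J-perp = I and F-inj <= I-perp = J force equality.  The
   subfunctors I^* and {d | J_* d = 0} are two such F, and dually on the
   projective side with J_* and {d | I^* d = 0}. *)
From Pilot Require Import Defs.
From mathcomp Require Import all_boot all_algebra.
Set Implicit Arguments. Unset Strict Implicit. Unset Printing Implicit Defensive.
Import GRing.Theory.
Local Open Scope ring_scope.

Section ExtriangulatedFacts.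
Variable X : PreExtri.
Hypothesis HX : is_extriangulated X.
Local Notation Obj := (Obj X).
(* MathComp's vector.v, ssrfun and binomial.v shadow these names of Defs. *)
Local Notation Hom := (@Defs.Hom X).
Local Notation comp := (@Defs.comp X _ _ _).
Local Notation bin1 := (@Defs.bin1 X).
Local Notation bin2 := (@Defs.bin2 X).

Lemma comp_assoc (A B C D : Obj) (h : Hom C D) (g : Hom B C) (f : Hom A B) :
  comp h (comp g f) = comp (comp h g) f.
Proof. by case: HX => [[H _] _]; apply: H. Qed.

Lemma comp_id_l (A B : Obj) (f : Hom A B) : comp (idm B) f = f.
Proof. by case: HX => [[_ [H _]] _]; apply: H. Qed.

Lemma comp_id_r (A B : Obj) (f : Hom A B) : comp f (idm A) = f.
Proof. by case: HX => [[_ [_ [H _]]] _]; apply: H. Qed.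

Lemma bpr1_bin1 (A B : Obj) : comp (bpr1 A B) (bin1 A B) = idm A.
Proof. by case: HX => [[_ [_ [_ [_ [_ [_ H]]]]]] _]; case: (H A B). Qed.

Lemma bpr2_bin2 (A B : Obj) : comp (bpr2 A B) (bin2 A B) = idm B.
Proof. by case: HX => [[_ [_ [_ [_ [_ [_ H]]]]]] _]; case: (H A B). Qed.

Lemma pushD (C A A' : Obj) (a : Hom A A') (d d' : Ext C A) :
  push a (d + d') = push a d + push a d'.
Proof. by case: HX => [_ [[H _] _]]; apply: H. Qed.

Lemma pullD (C' C A : Obj) (c : Hom C' C) (d d' : Ext C A) :
  pull c (d + d') = pull c d + pull c d'.
Proof. by case: HX => [_ [[_ [H _]] _]]; apply: H. Qed.

Lemma push_id (C A : Obj) (d : Ext C A) : push (idm A) d = d.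
Proof. by case: HX => [_ [[_ [_ [_ [_ [H _]]]]] _]]; apply: H. Qed.

Lemma pull_id (C A : Obj) (d : Ext C A) : pull (idm C) d = d.
Proof. by case: HX => [_ [[_ [_ [_ [_ [_ [H _]]]]]] _]]; apply: H. Qed.

Lemma push_comp (C A A' A'' : Obj) (a : Hom A A') (a' : Hom A' A'') (d : Ext C A) :
  push (comp a' a) d = push a' (push a d).
Proof. by case: HX => [_ [[_ [_ [_ [_ [_ [_ [H _]]]]]]] _]]; apply: H. Qed.

Lemma pull_comp (C'' C' C A : Obj) (c : Hom C' C) (c' : Hom C'' C') (d : Ext C A) :
  pull (comp c c') d = pull c' (pull c d).
Proof. by case: HX => [_ [[_ [_ [_ [_ [_ [_ [_ [H _]]]]]]]] _]]; apply: H. Qed.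

Lemma push_pull (C' C A A' : Obj) (c : Hom C' C) (a : Hom A A') (d : Ext C A) :
  push a (pull c d) = pull c (push a d).
Proof. by case: HX => [_ [[_ [_ [_ [_ [_ [_ [_ [_ H]]]]]]]] _]]; apply: H. Qed.

Lemma push0 (C A A' : Obj) (a : Hom A A') : push a (0 : Ext C A) = 0.
Proof. by apply: (addrI (push a (0 : Ext C A))); rewrite -pushD !addr0. Qed.

Lemma pull0 (C' C A : Obj) (c : Hom C' C) : pull c (0 : Ext C A) = 0.
Proof. by apply: (addrI (pull c (0 : Ext C A))); rewrite -pullD !addr0. Qed.

Lemma pushN (C A A' : Obj) (a : Hom A A') (d : Ext C A) : push a (- d) = - push a d.
Proof. by apply: (addrI (push a d)); rewrite -pushD !subrr push0. Qed.

Lemma pullN (C' C A : Obj) (c : Hom C' C) (d : Ext C A) : pull c (- d) = - pull c d.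
Proof. by apply: (addrI (pull c d)); rewrite -pullD !subrr pull0. Qed.

Lemma realize (C A : Obj) (d : Ext C A) :
  exists (B : Obj) (x : Hom A B) (y : Hom B C), real d x y.
Proof. by case: HX => [_ [_ [[H _ _] _]]]; apply: H. Qed.

Lemma real_morph (A B C A' B' C' : Obj) (d : Ext C A) (x : Hom A B) (y : Hom B C)
    (d' : Ext C' A') (x' : Hom A' B') (y' : Hom B' C') (a : Hom A A') (c : Hom C C') :
  real d x y -> real d' x' y' -> push a d = pull c d' ->
  exists b : Hom B B', comp b x = comp x' a /\ comp c y = comp y' b.
Proof. by case: HX => [_ [_ [[_ _ H] _]]]; apply: H. Qed.

Lemma real_split (C A : Obj) : real (0 : Ext C A) (bin1 A C) (bpr2 A C).
Proof. by case: HX => [_ [_ [_ [[H _] _]]]]; apply: H. Qed.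

Lemma et3 : ET3 X.
Proof. by case: HX => [_ [_ [_ [_ [H _]]]]]. Qed.

Lemma et3op : ET3op X.
Proof. by case: HX => [_ [_ [_ [_ [_ [H _]]]]]]. Qed.

Lemma push_inflation (A B C : Obj) (d : Ext C A) (x : Hom A B) (y : Hom B C) :
  real d x y -> push x d = 0.
Proof.
move=> r; have [? [_ _ ->]] := et3 (a := x) (b := bin1 B C) r (real_split C B) erefl.
exact: pull0.
Qed.

Lemma pull_deflation (A B C : Obj) (d : Ext C A) (x : Hom A B) (y : Hom B C) :
  real d x y -> pull y d = 0.
Proof.
move=> r; have [? [_ _ <-]] := et3op (b := bpr2 A B) (c := y) (real_split B A) r erefl.
exact: push0.
Qed.

Lemma inflation_factor (K Y Z Y1 : Obj) (e : Hom K Y) (q : Hom Y Z) (d : Ext Z K)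
    (g : Hom K Y1) :
  real d e q -> push g d = 0 -> exists g' : Hom Y Y1, comp g' e = g.
Proof.
move=> r gd0.
have [b [be _]] := real_morph r (real_split Z Y1) (etrans gd0 (esym (pull0 _ (idm Z)))).
by exists (comp (bpr1 Y1 Z) b); rewrite -comp_assoc be comp_assoc bpr1_bin1 comp_id_l.
Qed.

Lemma deflation_factor (A' Y C0 Z : Obj) (x' : Hom A' Y) (i : Hom Y C0) (d' : Ext C0 A')
    (g : Hom Z C0) :
  real d' x' i -> pull g d' = 0 -> exists g' : Hom Z Y, comp i g' = g.
Proof.
move=> r gd0.
have [b [_ bi]] := real_morph (real_split Z A') r (etrans (push0 _ (idm A')) (esym gd0)).
by exists (comp b (bin2 A' Z)); rewrite comp_assoc -bi -comp_assoc bpr2_bin2 comp_id_r.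
Qed.

Lemma ext_pull_from_injective (A E C0 C1 : Obj) (x : Hom A E) (y : Hom E C0)
    (d0 : Ext C0 A) (d1 : Ext C1 A) :
  injective_obj E -> real d0 x y -> exists g : Hom C1 C0, d1 = pull g d0.
Proof.
move=> injE r0; have [B1 [a [b r1]]] := realize d1.
have xd1 : push x d1 = pull (idm C1) 0 by rewrite (injE _ (push x d1)) pull0.
have [b' [b'a _]] := real_morph r1 (real_split C1 E) xd1.
have a_x : comp (comp (bpr1 E C1) b') a = comp x (idm A).
  by rewrite -comp_assoc b'a comp_assoc bpr1_bin1 comp_id_l comp_id_r.
have [g [_ _ gd]] := et3 r1 r0 a_x.
by exists g; rewrite -gd push_id.
Qed.

Lemma ext_push_from_projective (K P C A1 : Obj) (x : Hom K P) (y : Hom P C)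
    (d0 : Ext C K) (d1 : Ext C A1) :
  projective_obj P -> real d0 x y -> exists g : Hom K A1, d1 = push g d0.
Proof.
move=> projP r0; have [B1 [a [b r1]]] := realize d1.
have yd1 : push (idm A1) 0 = pull y d1 by rewrite (projP _ (pull y d1)) push0.
have [b' [_ bb']] := real_morph (real_split P A1) r1 yd1.
have y_b : comp (idm C) y = comp b (comp b' (bin2 A1 P)).
  by rewrite comp_assoc -bb' -comp_assoc bpr2_bin2 comp_id_r comp_id_l.
have [g [_ _ gd]] := et3op r0 r1 y_b.
by exists g; rewrite gd pull_id.
Qed.

Definition sub_ideal (M M' : ideal X) :=
  forall (A B : Obj) (f : Hom A B), M A B f -> M' A B f.

Lemma same_ideal_sub (M M' : ideal X) : same_ideal M M' -> sub_ideal M M'.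
Proof. by move=> MM' A B f /(MM' A B f). Qed.

Lemma same_ideal_sub_r (M M' : ideal X) : same_ideal M M' -> sub_ideal M' M.
Proof. by move=> MM' A B f /(MM' A B f). Qed.

Lemma Finj_perpR (F : subfun X) (M : ideal X) (A Y : Obj) (e : Hom A Y) :
  sub_ideal M (Ph F) -> Finj F e -> perpR M e.
Proof. by move=> MPh eF Z C m Mm d; rewrite -push_pull; apply/eF/MPh. Qed.

Lemma Ph_perpL (F : subfun X) (M : ideal X) (Z C : Obj) (phi : Hom Z C) :
  sub_ideal M (Finj F) -> Ph F phi -> perpL M phi.
Proof. by move=> MFinj phiF A Y m Mm d; rewrite -push_pull; apply/MFinj/phiF. Qed.

Lemma Fproj_perpL (F : subfun X) (M : ideal X) (Z C : Obj) (p : Hom Z C) :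
  sub_ideal M (Coph F) -> Fproj F p -> perpL M p.
Proof. by move=> MCoph pF A Y m Mm d; apply/pF/MCoph. Qed.

Lemma Coph_perpR (F : subfun X) (M : ideal X) (A Y : Obj) (psi : Hom A Y) :
  sub_ideal M (Fproj F) -> Coph F psi -> perpR M psi.
Proof. by move=> MFproj psiF Z C m Mm d; apply/MFproj/psiF. Qed.

Lemma sub_Ph_upstar (M : ideal X) : sub_ideal M (Ph (upstar M)).
Proof. by move=> Z C phi Mphi A d; exists C, phi, d. Qed.

Lemma sub_Coph_lowstar (M : ideal X) : sub_ideal M (Coph (lowstar M)).
Proof. by move=> A Y psi Mpsi C d; exists A, psi, d. Qed.

Definition push_annihilated (M : ideal X) : subfun X :=
  fun C A d => forall Y (j : Hom A Y), M A Y j -> push j d = 0.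

Definition pull_annihilated (M : ideal X) : subfun X :=
  fun C A d => forall Y (i : Hom Y C), M Y C i -> pull i d = 0.

Lemma push_annihilated_add (M : ideal X) : is_ideal M -> is_add_subfunctor (push_annihilated M).
Proof.
case=> _ _ _ Mcomp; split.
- by move=> C A Y j _; apply: push0.
- by move=> C A d d' dM d'M Y j Mj; rewrite pushD dM // d'M // addr0.
- by move=> C A d dM Y j Mj; rewrite pushN dM // oppr0.
- by move=> C A A' a d dM Y j Mj; rewrite -push_comp; apply/dM/Mcomp.
- by move=> C' C A c d dM Y j Mj; rewrite push_pull dM // pull0.
Qed.

Lemma pull_annihilated_add (M : ideal X) : is_ideal M -> is_add_subfunctor (pull_annihilated M).
Proof.
case=> _ _ Mcomp _; split.
- by move=> C A Y i _; apply: pull0.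
- by move=> C A d d' dM d'M Y i Mi; rewrite pullD dM // d'M // addr0.
- by move=> C A d dM Y i Mi; rewrite pullN dM // oppr0.
- by move=> C A A' a d dM Y i Mi; rewrite -push_pull dM // push0.
- by move=> C' C A c d dM Y i Mi; rewrite -pull_comp; apply/dM/Mcomp.
Qed.

Lemma sub_Finj_push_annihilated (M : ideal X) : sub_ideal M (Finj (push_annihilated M)).
Proof. by move=> A Y j Mj C d dM; apply: dM. Qed.

Lemma sub_Fproj_pull_annihilated (M : ideal X) : sub_ideal M (Fproj (pull_annihilated M)).
Proof. by move=> Z C i Mi A d dM; apply: dM. Qed.

Section CotorsionPair.
(* Keeps the object arguments of I and J explicit. *)
Unset Implicit Arguments.
Variables I J : ideal X.
Set Implicit Arguments.
Hypothesis HIJ : cotorsion_pair I J.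

Lemma I_perpL (A B : Obj) (f : Hom A B) : I A B f -> perpL J f.
Proof. by case: HIJ => IJ _ /(IJ A B f). Qed.

Lemma perpL_I (A B : Obj) (f : Hom A B) : perpL J f -> I A B f.
Proof. by case: HIJ => IJ _ /(IJ A B f). Qed.

Lemma J_perpR (A B : Obj) (f : Hom A B) : J A B f -> perpR I f.
Proof. by case: HIJ => _ JI /(JI A B f). Qed.

Lemma perpR_J (A B : Obj) (f : Hom A B) : perpR I f -> J A B f.
Proof. by case: HIJ => _ JI /(JI A B f). Qed.

Lemma precovering_preenveloping :
  is_ideal I -> enough_injectives X -> special_precovering I -> special_preenveloping J.
Proof.
case=> _ _ Icomp _ enough_inj Ipc A.
have [E [C0 [x [y [d0 [injE r0]]]]]] := enough_inj A.
have [Y [i [Ii [A1 [B [_ [_ [d [A' [x' [d' [j [_ [_ r' [_ _ jd] jI]]]]]]]]]]]]]] := Ipc C0.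
have [P [e [q re]]] := realize (pull i d0).
exists P, e; split.
- apply: perpR_J => Z1 C1 m Im d1.
  have [g1 ->] := ext_pull_from_injective d1 injE r0.
  have g1m_d' : pull (comp g1 m) d' = 0.
    by rewrite -[d']pull_id -jd; apply/jI/Icomp.
  have [g' ig'] := deflation_factor r' g1m_d'.
  by rewrite push_pull -pull_comp -ig' pull_comp -push_pull (push_inflation re) pull0.
- have [b' [b'e qi]] := real_morph re r0 (push_id _).
  exists Y, q, (pull i d0), E, C0, x, y, d0, b', i; split => //; last exact: I_perpL Ii.
  by split; rewrite ?push_id.
Qed.

Lemma preenveloping_precovering :
  is_ideal J -> enough_projectives X -> special_preenveloping J -> special_precovering I.
Proof.
case=> _ _ _ Jcomp enough_proj Jpe C.
have [K [P [x [y [d0 [projP r0]]]]]] := enough_proj C.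
have [Y [e [Je [Z [q [d [B [C1 [_ [_ [d'' [_ [j [r _ [_ _ jd] jJ]]]]]]]]]]]]]] := Jpe K.
have [Q [x2 [p rp]]] := realize (push e d0).
exists Q, p; split.
- apply: perpL_I => A1 Y1 m Jm d1.
  have [g1 ->] := ext_push_from_projective d1 projP r0.
  have mg1_d : push (comp m g1) d = 0.
    by rewrite -[d]push_id jd push_pull; apply/jJ/Jcomp.
  have [g' g'e] := inflation_factor r mg1_d.
  by rewrite -push_comp -g'e push_comp -push_pull (pull_deflation rp) push0.
- have [b' [x2b' pb']] := real_morph r0 rp (esym (pull_id _)).
  exists K, P, x, y, d0, Y, x2, (push e d0), e, b'; split => //; last exact: J_perpR Je.
  by split; rewrite ?pull_id.
Qed.

Lemma sp_inj_preenveloping (F : subfun X) :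
  sub_ideal (Ph F) I -> sub_ideal (Finj F) J -> enough_sp_inj F -> special_preenveloping J.
Proof.
move=> PhI FinjJ spF A.
have [B [C [e [y [d [_ r eF [B' [C' [x' [y' [d' [b [phi [r' tm phiF]]]]]]]]]]]]]] := spF A.
exists B, e; split; first exact: FinjJ.
by exists C, y, d, B', C', x', y', d', b, phi; split => //; apply/I_perpL/PhI.
Qed.

Lemma preenveloping_sp_inj (F : subfun X) :
  sub_ideal I (Ph F) -> sub_ideal J (Finj F) -> special_preenveloping J -> enough_sp_inj F.
Proof.
move=> IPh JFinj Jpe A.
have [Y [e [Je [Z [y [d [B [C [x' [y' [d' [b [j [r r' tm jJ]]]]]]]]]]]]]] := Jpe A.
have jF : Ph F j by apply/IPh/perpL_I.
exists Y, Z, e, y, d; split => //.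
- by case: tm => _ _ dd'; rewrite -[d]push_id dd'; apply: jF.
- exact: JFinj _ _ _ Je.
- by exists B, C, x', y', d', b, j.
Qed.

Lemma sp_proj_precovering (F : subfun X) :
  sub_ideal (Fproj F) I -> sub_ideal (Coph F) J -> enough_sp_proj F -> special_precovering I.
Proof.
move=> FprojI CophJ spF C.
have [K [B [x [p [d [_ r pF [K' [B' [x' [y' [d' [psi [b [r' tm psiF]]]]]]]]]]]]]] := spF C.
exists B, p; split; first exact: FprojI.
by exists K', B', x', y', d', K, x, d, psi, b; split => //; apply/J_perpR/CophJ.
Qed.

Lemma precovering_sp_proj (F : subfun X) :
  sub_ideal I (Fproj F) -> sub_ideal J (Coph F) -> special_precovering I -> enough_sp_proj F.
Proof.
move=> IFproj JCoph Ipc C.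
have [Y [i [Ii [A [B [x [y [d [A' [x' [d' [j [b [r r' tm jI]]]]]]]]]]]]]] := Ipc C.
have jF : Coph F j by apply/JCoph/perpR_J.
exists A', Y, x', i, d'; split => //.
- by case: tm => _ _ dd'; rewrite -[d']pull_id -dd'; apply: jF.
- exact: IFproj _ _ _ Ii.
- by exists A, B, x, y, d, j, b.
Qed.

Lemma Ph_Finj_cotorsion (F : subfun X) :
  sub_ideal I (Ph F) -> sub_ideal J (Finj F) -> same_ideal I (Ph F) /\ same_ideal J (Finj F).
Proof.
move=> IPh JFinj; split=> A B f; split; [exact: IPh | | exact: JFinj |].
- by move/(Ph_perpL JFinj)/perpL_I.
- by move/(Finj_perpR IPh)/perpR_J.
Qed.

Lemma Fproj_Coph_cotorsion (F : subfun X) :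
  sub_ideal I (Fproj F) -> sub_ideal J (Coph F) ->
  same_ideal I (Fproj F) /\ same_ideal J (Coph F).
Proof.
move=> IFproj JCoph; split=> A B f; split; [exact: IFproj | | exact: JCoph |].
- by move/(Fproj_perpL JCoph)/perpL_I.
- by move/(Coph_perpR IFproj)/perpR_J.
Qed.

Lemma I_sub_Ph_push_annihilated : sub_ideal I (Ph (push_annihilated J)).
Proof. by move=> Z C phi Iphi A d Y j Jj; rewrite push_pull; apply: (I_perpL Iphi). Qed.

Lemma J_sub_Coph_pull_annihilated : sub_ideal J (Coph (pull_annihilated I)).
Proof. by move=> A Y psi Jpsi C d Z i Ii; apply: (J_perpR Jpsi). Qed.

Lemma J_sub_Finj_upstar : sub_ideal J (Finj (upstar I)).
Proof.
move=> A Y e Je C _ [C0 [i [d [Ii ->]]]]; rewrite push_pull; exact: (J_perpR Je).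
Qed.

Lemma I_sub_Fproj_lowstar : sub_ideal I (Fproj (lowstar J)).
Proof. by move=> Z C p Ip A _ [A0 [j [d [Jj ->]]]]; apply: (I_perpL Ip). Qed.

Lemma preenveloping_sp_inj_cotorsion (F : subfun X) :
  sub_ideal I (Ph F) -> sub_ideal J (Finj F) -> special_preenveloping J ->
  [/\ enough_sp_inj F, same_ideal I (Ph F) & same_ideal J (Finj F)].
Proof.
move=> IPh JFinj Jpe; have [IPhF JFinjF] := Ph_Finj_cotorsion IPh JFinj.
by split=> //; apply: preenveloping_sp_inj.
Qed.

Lemma precovering_sp_proj_cotorsion (F : subfun X) :
  sub_ideal I (Fproj F) -> sub_ideal J (Coph F) -> special_precovering I ->
  [/\ enough_sp_proj F, same_ideal I (Fproj F) & same_ideal J (Coph F)].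
Proof.
move=> IFproj JCoph Ipc; have [IFprojF JCophF] := Fproj_Coph_cotorsion IFproj JCoph.
by split=> //; apply: precovering_sp_proj.
Qed.

Lemma Ph_sp_inj_preenveloping (F : subfun X) :
  enough_sp_inj F -> same_ideal I (Ph F) -> special_preenveloping J.
Proof.
move=> spF IPh; apply: (sp_inj_preenveloping (same_ideal_sub_r IPh) _ spF) => A B f.
by move/(Finj_perpR (same_ideal_sub IPh))/perpR_J.
Qed.

Lemma Finj_sp_inj_preenveloping (F : subfun X) :
  enough_sp_inj F -> same_ideal J (Finj F) -> special_preenveloping J.
Proof.
move=> spF JFinj; apply: (sp_inj_preenveloping _ (same_ideal_sub_r JFinj) spF) => A B f.
by move/(Ph_perpL (same_ideal_sub JFinj))/perpL_I.
Qed.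

Lemma Fproj_sp_proj_precovering (F : subfun X) :
  enough_sp_proj F -> same_ideal I (Fproj F) -> special_precovering I.
Proof.
move=> spF IFproj; apply: (sp_proj_precovering (same_ideal_sub_r IFproj) _ spF) => A B f.
by move/(Coph_perpR (same_ideal_sub IFproj))/perpR_J.
Qed.

Lemma Coph_sp_proj_precovering (F : subfun X) :
  enough_sp_proj F -> same_ideal J (Coph F) -> special_precovering I.
Proof.
move=> spF JCoph; apply: (sp_proj_precovering _ (same_ideal_sub_r JCoph) spF) => A B f.
by move/(Fproj_perpL (same_ideal_sub JCoph))/perpL_I.
Qed.

Lemma Ph_sp_inj_iff_preenveloping : is_ideal J ->
  (exists F : subfun X, [/\ is_add_subfunctor F, enough_sp_inj F & same_ideal I (Ph F)]) <->
  special_preenveloping J.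
Proof.
move=> HJ; split=> [[F [_ spF IPh]] | Jpe]; first exact: Ph_sp_inj_preenveloping spF IPh.
have [spF IPh _] := preenveloping_sp_inj_cotorsion
  I_sub_Ph_push_annihilated (@sub_Finj_push_annihilated J) Jpe.
by exists (push_annihilated J); split=> //; apply: push_annihilated_add.
Qed.

Lemma Finj_sp_inj_iff_preenveloping : is_ideal J ->
  (exists F : subfun X, [/\ is_add_subfunctor F, enough_sp_inj F & same_ideal J (Finj F)]) <->
  special_preenveloping J.
Proof.
move=> HJ; split=> [[F [_ spF JFinj]] | Jpe]; first exact: Finj_sp_inj_preenveloping spF JFinj.
have [spF _ JFinj] := preenveloping_sp_inj_cotorsion
  I_sub_Ph_push_annihilated (@sub_Finj_push_annihilated J) Jpe.
by exists (push_annihilated J); split=> //; apply: push_annihilated_add.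
Qed.

Lemma upstar_Ph_iff_preenveloping :
  enough_sp_inj (upstar I) /\ same_ideal I (Ph (upstar I)) <-> special_preenveloping J.
Proof.
split=> [[spF IPh] | Jpe]; first exact: Ph_sp_inj_preenveloping spF IPh.
by case: (preenveloping_sp_inj_cotorsion (@sub_Ph_upstar I) J_sub_Finj_upstar Jpe).
Qed.

Lemma upstar_Finj_iff_preenveloping :
  enough_sp_inj (upstar I) /\ same_ideal J (Finj (upstar I)) <-> special_preenveloping J.
Proof.
split=> [[spF JFinj] | Jpe]; first exact: Finj_sp_inj_preenveloping spF JFinj.
by case: (preenveloping_sp_inj_cotorsion (@sub_Ph_upstar I) J_sub_Finj_upstar Jpe).
Qed.

Lemma Fproj_sp_proj_iff_precovering : is_ideal I ->
  (exists F : subfun X, [/\ is_add_subfunctor F, enough_sp_proj F & same_ideal I (Fproj F)]) <->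
  special_precovering I.
Proof.
move=> HI; split=> [[F [_ spF IFproj]] | Ipc]; first exact: Fproj_sp_proj_precovering spF IFproj.
have [spF IFproj _] := precovering_sp_proj_cotorsion
  (@sub_Fproj_pull_annihilated I) J_sub_Coph_pull_annihilated Ipc.
by exists (pull_annihilated I); split=> //; apply: pull_annihilated_add.
Qed.

Lemma Coph_sp_proj_iff_precovering : is_ideal I ->
  (exists F : subfun X, [/\ is_add_subfunctor F, enough_sp_proj F & same_ideal J (Coph F)]) <->
  special_precovering I.
Proof.
move=> HI; split=> [[F [_ spF JCoph]] | Ipc]; first exact: Coph_sp_proj_precovering spF JCoph.
have [spF _ JCoph] := precovering_sp_proj_cotorsion
  (@sub_Fproj_pull_annihilated I) J_sub_Coph_pull_annihilated Ipc.
by exists (pull_annihilated I); split=> //; apply: pull_annihilated_add.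
Qed.

Lemma lowstar_Fproj_iff_precovering :
  enough_sp_proj (lowstar J) /\ same_ideal I (Fproj (lowstar J)) <-> special_precovering I.
Proof.
split=> [[spF IFproj] | Ipc]; first exact: Fproj_sp_proj_precovering spF IFproj.
by case: (precovering_sp_proj_cotorsion I_sub_Fproj_lowstar (@sub_Coph_lowstar J) Ipc).
Qed.

Lemma lowstar_Coph_iff_precovering :
  enough_sp_proj (lowstar J) /\ same_ideal J (Coph (lowstar J)) <-> special_precovering I.
Proof.
split=> [[spF JCoph] | Ipc]; first exact: Coph_sp_proj_precovering spF JCoph.
by case: (precovering_sp_proj_cotorsion I_sub_Fproj_lowstar (@sub_Coph_lowstar J) Ipc).
Qed.

End CotorsionPair.
End ExtriangulatedFacts.

Theorem mainTheorem14 (X : PreExtri) (HX : is_extriangulated X)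
  (Hinj : enough_injectives X) (Hproj : enough_projectives X)
  (I J : ideal X) (HI : is_ideal I) (HJ : is_ideal J) (HIJ : cotorsion_pair I J) :
  [<-> complete_cotorsion_pair I J;
       special_precovering I;
       exists F : subfun X, [/\ is_add_subfunctor F, enough_sp_inj F & same_ideal I (Ph F)];
       exists F : subfun X, [/\ is_add_subfunctor F, enough_sp_proj F & same_ideal I (Fproj F)];
       enough_sp_inj (upstar I) /\ same_ideal I (Ph (upstar I));
       enough_sp_proj (lowstar J) /\ same_ideal I (Fproj (lowstar J));
       special_preenveloping J;
       exists F : subfun X, [/\ is_add_subfunctor F, enough_sp_proj F & same_ideal J (Coph F)];
       exists F : subfun X, [/\ is_add_subfunctor F, enough_sp_inj F & same_ideal J (Finj F)];
       enough_sp_proj (lowstar J) /\ same_ideal J (Coph (lowstar J));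
       enough_sp_inj (upstar I) /\ same_ideal J (Finj (upstar I))].
Proof.
have pc_pe : special_precovering I <-> special_preenveloping J.
  split; [exact: precovering_preenveloping | exact: preenveloping_precovering].
have e3 := Ph_sp_inj_iff_preenveloping HX HIJ HJ.
have e4 := Fproj_sp_proj_iff_precovering HX HIJ HI.
have e5 := upstar_Ph_iff_preenveloping HX HIJ.
have e6 := lowstar_Fproj_iff_precovering HX HIJ.
have e8 := Coph_sp_proj_iff_precovering HX HIJ HI.
have e9 := Finj_sp_inj_iff_preenveloping HX HIJ HJ.
have e10 := lowstar_Coph_iff_precovering HX HIJ.
have e11 := upstar_Finj_iff_preenveloping HX HIJ.
split; first by case.
split; first by move/pc_pe/e3.
split; first by move/e3/pc_pe/e4.
split; first by move/e4/pc_pe/e5.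
split; first by move/e5/pc_pe/e6.
split; first by move/e6/pc_pe.
split; first by move/pc_pe/e8.
split; first by move/e8/pc_pe/e9.
split; first by move/e9/pc_pe/e10.
split; first by move/e10/pc_pe/e11.
by move/e11=> Jpe; split; first exact/pc_pe.
Qed.
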